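(* (1) $\to_{wv}$ is quasi-strongly confluent: ${}_{wv}\!\!\leftarrow\cdot\to_{wv}\ \subseteq\ (\to_{wv}\cdot\,{}_{wv}\!\!\leftarrow)\,\cup=$. (2) $\to_{wd}$ and $\to_d$ are each quasi-strongly confluent: ${}_{wd}\!\!\leftarrow\cdot\to_{wd}\subseteq(\to_{wd}\cdot\,{}_{wd}\!\!\leftarrow)\cup=$ and ${}_{d}\!\leftarrow\cdot\to_{d}\subseteq(\to_{d}\cdot\,{}_{d}\!\leftarrow)\cup=$. (3) ${}_{wd}\!\!\leftarrow\cdot\to_{wv}\ \subseteq\ \to_{wv}\cdot\,{}_{wd}\!\!\leftarrow$; moreover ${}_{d}\!\leftarrow\cdot\to_{v}\ \subseteq\ \to_{v}\cdot\,{}^*_{d}\!\leftarrow$; and ${}^*_{d}\!\leftarrow\cdot\to_v^*\ \subseteq\ \to_v^*\cdot\,{}^*_{d}\!\leftarrow$. (4) $\to_v$ is confluent: ${}^*_{v}\!\leftarrow\cdot\to_v^*\ \subseteq\ \to_v^*\cdot\,{}^*_{v}\!\leftarrow$.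
   Context: Bang calculus. Fix a countably infinite set of variables. The set $!\Lambda$ of terms is $T,S,R ::= x \mid \lambda x.T \mid T\,S \mid \mathrm{der}\,T \mid\ !T$; $\lambda$ is the only binder, terms are taken up to $\alpha$-conversion, $T\{S/x\}$ is capture-avoiding substitution. Contexts: $C ::= [\cdot] \mid \lambda x.C \mid C\,T \mid T\,C \mid \mathrm{der}\,C \mid\ !C$; ground contexts: $W ::= [\cdot] \mid \lambda x.W \mid W\,T \mid T\,W \mid \mathrm{der}\,W$. Root steps: $(\lambda x.T)(!S)\mapsto_v T\{S/x\}$, $\mathrm{der}(!T)\mapsto_d T$. For $r\in\{v,d\}$, $T\to_r S$ iff $T=C[T']$, $S=C[S']$ for some context $C$ with $T'\mapsto_r S'$; $\to_{wr}$ is the same with ground contexts only. Notation: $\cdot$ is relational composition (first the left relation, then the right), ${}_r\!\leftarrow$ is the converse of $\to_r$, ${}^*$ denotes reflexive-transitive closure, and $=$ is the identity relation. *)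

(* Terms of the bang calculus up to alpha-conversion,
   represented with de Bruijn indices (free variables = indices escaping
   all binders; the set of variables is nat, countably infinite). *)
From Stdlib Require Import Arith Relations.

Inductive term : Type :=
  | Var : nat -> term
  | Lam : term -> term
  | App : term -> term -> term
  | Der : term -> term
  | Bang : term -> term.

Fixpoint lift (k : nat) (t : term) : term :=
  match t with
  | Var n => if n <? k then Var n else Var (S n)
  | Lam t1 => Lam (lift (S k) t1)
  | App t1 t2 => App (lift k t1) (lift k t2)
  | Der t1 => Der (lift k t1)
  | Bang t1 => Bang (lift k t1)
  end.

(* subst k s t : capture-avoiding substitution of s for index k in t,
   decrementing indices above k (the binder being removed). *)
Fixpoint subst (k : nat) (s : term) (t : term) : term :=
  match t with
  | Var n =>
      if n <? k then Var n
      else if n =? k then s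
      else Var (pred n)
  | Lam t1 => Lam (subst (S k) (lift 0 s) t1)
  | App t1 t2 => App (subst k s t1) (subst k s t2)
  | Der t1 => Der (subst k s t1)
  | Bang t1 => Bang (subst k s t1)
  end.

(* T{S/x} where x is the variable bound by the removed lambda *)
Definition subst0 (t s : term) : term := subst 0 s t.

Inductive root_v : term -> term -> Prop :=
  | root_v_intro : forall T S, root_v (App (Lam T) (Bang S)) (subst0 T S).
Inductive root_d : term -> term -> Prop :=
  | root_d_intro : forall T, root_d (Der (Bang T)) T.

Inductive ctx : Type :=
  | Hole : ctx
  | CLam : ctx -> ctx
  | CAppL : ctx -> term -> ctx
  | CAppR : term -> ctx -> ctx
  | CDer : ctx -> ctx
  | CBang : ctx -> ctx.

Fixpoint plug (C : ctx) (t : term) : term :=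
  match C with
  | Hole => t
  | CLam C1 => Lam (plug C1 t)
  | CAppL C1 u => App (plug C1 t) u
  | CAppR u C1 => App u (plug C1 t)
  | CDer C1 => Der (plug C1 t)
  | CBang C1 => Bang (plug C1 t)
  end.

Fixpoint ground (C : ctx) : Prop :=
  match C with
  | Hole => True
  | CLam C1 => ground C1
  | CAppL C1 _ => ground C1
  | CAppR _ C1 => ground C1
  | CDer C1 => ground C1
  | CBang _ => False
  end.

Definition ctx_clos (r : relation term) : relation term :=
  fun t s => exists C t' s', t = plug C t' /\ s = plug C s' /\ r t' s'.
Definition wctx_clos (r : relation term) : relation term :=
  fun t s => exists C t' s', ground C /\ t = plug C t' /\ s = plug C s' /\ r t' s'.

Definition step_v := ctx_clos root_v.
Definition step_d := ctx_clos root_d.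
Definition step_wv := wctx_clos root_v.
Definition step_wd := wctx_clos root_d.

Definition rcomp (R S : relation term) : relation term :=
  fun x z => exists y, R x y /\ S y z.
Definition conv (R : relation term) : relation term := fun x y => R y x.
Definition rstar (R : relation term) : relation term := clos_refl_trans term R.
Definition runion (R S : relation term) : relation term := fun x y => R x y \/ S x y.
Definition ident : relation term := fun x y => x = y.
Definition rincl (R S : relation term) : Prop := forall x y, R x y -> S x y.

Definition quasi_strongly_confluent (R : relation term) : Prop :=
  rincl (rcomp (conv R) R) (runion (rcomp R (conv R)) ident).

(* A critical-pair analysis of the two root rules gives the local diagrams.
   The only overlaps come from a step inside the body or the argument of a
   v-redex, and they are closed by substitutivity of the step.  A weak step
   never takes place under a bang, so the argument of a weak v-redex cannot be
   reduced and all weak diagrams close in one step; in the full calculus a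
   d-step in the argument is duplicated by the substitution, hence the
   d-star in (3).  Since the local d/v diagram has a single v-step on the
   other side, it can be pasted into the commutation of the reflexive
   transitive closures, and confluence of v follows from the diamond
   property of parallel v-reduction, proved with Takahashi's complete
   development. *)

From Stdlib Require Import Relations Arith Lia.

Section AbstractRewriting.

Context {A : Type}.

Lemma clos_rt_map (R : relation A) (f : A -> A) :
  (forall x y, R x y -> R (f x) (f y)) ->
  forall x y, clos_refl_trans A R x y -> clos_refl_trans A R (f x) (f y).
Proof.
  intros Hf x y Hxy; induction Hxy; eauto using clos_refl_trans.
Qed.

Lemma clos_rt_mono (R S : relation A) :
  inclusion A R S -> inclusion A (clos_refl_trans A R) (clos_refl_trans A S).
Proof.
  intros HRS x y Hxy; induction Hxy; eauto using clos_refl_trans.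
Qed.

Section Commutation.

Variables R S : relation A.

Hypothesis local_commute : forall t a c,
  R t a -> S t c -> exists e, S a e /\ clos_refl_trans A R c e.

Lemma strip_commute t a c :
  clos_refl_trans A R t a -> S t c -> exists e, S a e /\ clos_refl_trans A R c e.
Proof.
  intros Hta; revert c; apply clos_rt_rt1n in Hta.
  induction Hta as [|t b a Htb Hba IH]; intros c Htc.
  - eauto using clos_refl_trans.
  - destruct (local_commute _ _ _ Htb Htc) as (d & Hbd & Hcd).
    destruct (IH _ Hbd) as (e & Hae & Hde).
    eauto using clos_refl_trans.
Qed.

Lemma star_commute t a c :
  clos_refl_trans A R t a -> clos_refl_trans A S t c ->
  exists e, clos_refl_trans A S a e /\ clos_refl_trans A R c e.
Proof.
  intros Hta Htc; revert a Hta; apply clos_rt_rt1n in Htc.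
  induction Htc as [|t b c Htb Hbc IH]; intros a Hta.
  - eauto using clos_refl_trans.
  - destruct (strip_commute _ _ _ Hta Htb) as (d & Had & Hbd).
    destruct (IH _ Hbd) as (e & Hde & Hce).
    eauto using clos_refl_trans.
Qed.

End Commutation.

Lemma confluent_of_diamond_between (R P : relation A) :
  inclusion A R P -> inclusion A P (clos_refl_trans A R) ->
  (forall t a c, P t a -> P t c -> exists e, P a e /\ P c e) ->
  forall t a c, clos_refl_trans A R t a -> clos_refl_trans A R t c ->
  exists e, clos_refl_trans A R a e /\ clos_refl_trans A R c e.
Proof.
  intros HRP HPR Hdiamond t a c Hta Htc.
  destruct (star_commute P P) with t a c as (e & Hae & Hce).
  - intros u b d Hub Hud.
    destruct (Hdiamond u b d Hub Hud) as (e & ? & ?). eauto using clos_refl_trans.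
  - exact (clos_rt_mono _ _ HRP _ _ Hta).
  - exact (clos_rt_mono _ _ HRP _ _ Htc).
  - exists e; split; apply clos_rt_idempotent, (clos_rt_mono _ _ HPR); assumption.
Qed.

End AbstractRewriting.

Ltac index_cases := repeat (cbn [lift subst] in *; match goal with
  | |- context [?a <? ?b] => destruct (Nat.ltb_spec a b)
  | |- context [?a =? ?b] => destruct (Nat.eqb_spec a b) end); try lia;
  try reflexivity; try (f_equal; lia).

Lemma lift_lift t : forall k j, k <= j -> lift k (lift j t) = lift (S j) (lift k t).
Proof. induction t; intros k j Hkj; simpl; [index_cases | f_equal; auto with arith ..]. Qed.

Lemma subst_lift t : forall k s, subst k s (lift k t) = t.
Proof. induction t; intros k s; simpl; [index_cases | f_equal; auto ..]. Qed.

Lemma lift_subst_below t : forall k j s, k <= j ->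
  lift k (subst j s t) = subst (S j) (lift k s) (lift k t).
Proof.
  induction t; intros k j s Hkj; simpl; [index_cases | | f_equal; auto ..].
  rewrite IHt, (lift_lift s 0 k) by lia. reflexivity.
Qed.

Lemma lift_subst_above t : forall k j s, k <= j ->
  lift j (subst k s t) = subst k (lift j s) (lift (S j) t).
Proof.
  induction t; intros k j s Hkj; simpl; [index_cases | | f_equal; auto ..].
  rewrite IHt, (lift_lift s 0 j) by lia. reflexivity.
Qed.

Lemma subst_subst t : forall k j s u, k <= j ->
  subst j s (subst k u t) = subst k (subst j s u) (subst (S j) (lift k s) t).
Proof.
  induction t; intros k j s u Hkj; simpl; [index_cases | | f_equal; auto ..].
  - rewrite subst_lift. reflexivity.
  - rewrite IHt, (lift_subst_below u 0 j s), (lift_lift s 0 k) by lia. reflexivity.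
Qed.

Inductive ctx_step (r : relation term) (under_bang : bool) : relation term :=
  | ctx_step_root t s : r t s -> ctx_step r under_bang t s
  | ctx_step_lam t s : ctx_step r under_bang t s -> ctx_step r under_bang (Lam t) (Lam s)
  | ctx_step_appl t s u : ctx_step r under_bang t s -> ctx_step r under_bang (App t u) (App s u)
  | ctx_step_appr t s u : ctx_step r under_bang t s -> ctx_step r under_bang (App u t) (App u s)
  | ctx_step_der t s : ctx_step r under_bang t s -> ctx_step r under_bang (Der t) (Der s)
  | ctx_step_bang t s :
      under_bang = true -> ctx_step r under_bang t s -> ctx_step r under_bang (Bang t) (Bang s).

#[local] Hint Constructors root_v root_d ctx_step : core.

Lemma ctx_step_plug r b C t s :
  (b = false -> ground C) -> r t s -> ctx_step r b (plug C t) (plug C s).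
Proof.
  intros HC Hts; induction C; simpl in *; auto.
  destruct b.
  - apply ctx_step_bang; [reflexivity | apply IHC; discriminate].
  - contradiction (HC eq_refl).
Qed.

Lemma ctx_step_inv_plug {r b t s} : ctx_step r b t s ->
  exists C t' s', (b = false -> ground C) /\ t = plug C t' /\ s = plug C s' /\ r t' s'.
Proof.
  induction 1 as [t s Hts | t s _ IH | t s u _ IH | t s u _ IH | t s _ IH | t s Hb _ IH];
    try destruct IH as (C & t' & s' & HC & -> & -> & Hr).
  - exists Hole, t, s; simpl; auto.
  - exists (CLam C), t', s'; auto.
  - exists (CAppL C u), t', s'; auto.
  - exists (CAppR u C), t', s'; auto.
  - exists (CDer C), t', s'; auto.
  - exists (CBang C), t', s'; subst; repeat split; auto; discriminate.
Qed.

Lemma ctx_clos_iff r t s : ctx_clos r t s <-> ctx_step r true t s.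
Proof.
  split.
  - intros (C & t' & s' & -> & -> & Hr). apply ctx_step_plug; [discriminate | exact Hr].
  - intros Hts. destruct (ctx_step_inv_plug Hts) as (C & t' & s' & _ & Ht & Hs & Hr).
    exists C, t', s'; auto.
Qed.

Lemma wctx_clos_iff r t s : wctx_clos r t s <-> ctx_step r false t s.
Proof.
  split.
  - intros (C & t' & s' & HC & -> & -> & Hr). apply ctx_step_plug; auto.
  - intros Hts. destruct (ctx_step_inv_plug Hts) as (C & t' & s' & HC & Ht & Hs & Hr).
    exists C, t', s'; auto.
Qed.

Lemma rstar_ctx_clos_iff r t s : rstar (ctx_clos r) t s <-> rstar (ctx_step r true) t s.
Proof.
  split; apply clos_rt_mono; intros x y; apply ctx_clos_iff.
Qed.

Section Substitutivity.

Variables (r : relation term) (b : bool).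

Lemma ctx_step_lift :
  (forall k t s, r t s -> r (lift k t) (lift k s)) ->
  forall t s, ctx_step r b t s -> forall k, ctx_step r b (lift k t) (lift k s).
Proof. intros Hr t s Hts; induction Hts; simpl; auto. Qed.

Lemma ctx_step_subst :
  (forall k u t s, r t s -> r (subst k u t) (subst k u s)) ->
  forall t s, ctx_step r b t s -> forall k u, ctx_step r b (subst k u t) (subst k u s).
Proof. intros Hr t s Hts; induction Hts; simpl; auto. Qed.

End Substitutivity.

Lemma root_v_subst k u t s : root_v t s -> root_v (subst k u t) (subst k u s).
Proof.
  destruct 1. simpl. unfold subst0. rewrite subst_subst by lia. constructor.
Qed.

Lemma root_d_lift k t s : root_d t s -> root_d (lift k t) (lift k s).
Proof. destruct 1. constructor. Qed.

Lemma root_d_subst k u t s : root_d t s -> root_d (subst k u t) (subst k u s).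
Proof. destruct 1. constructor. Qed.

Section StarCongruence.

Variables (r : relation term) (b : bool).

Lemma rstar_ctx_step_lam t s : rstar (ctx_step r b) t s -> rstar (ctx_step r b) (Lam t) (Lam s).
Proof. apply clos_rt_map; auto. Qed.

Lemma rstar_ctx_step_appl t s u :
  rstar (ctx_step r b) t s -> rstar (ctx_step r b) (App t u) (App s u).
Proof. apply clos_rt_map with (f := fun x => App x u); auto. Qed.

Lemma rstar_ctx_step_appr t s u :
  rstar (ctx_step r b) t s -> rstar (ctx_step r b) (App u t) (App u s).
Proof. apply clos_rt_map; auto. Qed.

Lemma rstar_ctx_step_der t s : rstar (ctx_step r b) t s -> rstar (ctx_step r b) (Der t) (Der s).
Proof. apply clos_rt_map; auto. Qed.

Lemma rstar_ctx_step_bang t s :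
  rstar (ctx_step r true) t s -> rstar (ctx_step r true) (Bang t) (Bang s).
Proof. apply clos_rt_map; auto. Qed.

End StarCongruence.

#[local] Hint Resolve rstar_ctx_step_lam rstar_ctx_step_appl rstar_ctx_step_appr
  rstar_ctx_step_der rstar_ctx_step_bang rt_step rt_refl : core.
#[local] Hint Unfold rstar : core.

(* The argument may be duplicated, also under bangs. *)
Lemma ctx_step_subst_arg r :
  (forall k t s, r t s -> r (lift k t) (lift k s)) ->
  forall t k u u', ctx_step r true u u' -> rstar (ctx_step r true) (subst k u t) (subst k u' t).
Proof.
  intros Hr t; induction t as [n | t IH | t1 IH1 t2 IH2 | t IH | t IH]; intros k u u' Hu; simpl.
  - destruct (n <? k); [|destruct (n =? k)]; auto.
  - apply rstar_ctx_step_lam, IH, ctx_step_lift; assumption.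
  - apply rt_trans with (App (subst k u' t1) (subst k u t2));
      [apply rstar_ctx_step_appl | apply rstar_ctx_step_appr]; auto.
  - auto.
  - auto.
Qed.

Lemma ctx_step_v_subst0 b t t' s :
  ctx_step root_v b t t' -> ctx_step root_v b (subst0 t s) (subst0 t' s).
Proof. intros Htt'. apply ctx_step_subst; [exact root_v_subst | exact Htt']. Qed.

Lemma ctx_step_d_subst0 b t t' s :
  ctx_step root_d b t t' -> ctx_step root_d b (subst0 t s) (subst0 t' s).
Proof. intros Htt'. apply ctx_step_subst; [exact root_d_subst | exact Htt']. Qed.

Lemma rstar_ctx_step_d_subst0_arg t s s' :
  ctx_step root_d true s s' -> rstar (ctx_step root_d true) (subst0 t s) (subst0 t s').
Proof. apply ctx_step_subst_arg, root_d_lift. Qed.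

(* Only steps out of a term with a known head are inverted, so that the
   repetition terminates. *)
Ltac invert_steps :=
  let is_constructor t :=
    match t with Var _ => idtac | Lam _ => idtac | App _ _ => idtac | Der _ => idtac | Bang _ => idtac end in
  repeat match goal with
  | H : root_v _ _ |- _ => inversion H; subst; clear H
  | H : root_d _ _ |- _ => inversion H; subst; clear H
  | H : ctx_step _ _ ?t _ |- _ => is_constructor t; inversion H; subst; clear H
  | H : false = true |- _ => discriminate H
  end.

Ltac join_congruence :=
  match goal with
  | IH : forall c, ctx_step _ _ ?t c -> _, H : ctx_step _ _ ?t _ |- _ =>
      decompose [ex and or] (IH _ H); subst; solve [eauto 8]
  end.

Lemma wv_local_quasi_diamond t a c :
  ctx_step root_v false t a -> ctx_step root_v false t c ->
  (exists e, ctx_step root_v false a e /\ ctx_step root_v false c e) \/ a = c.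
Proof.
  intros Hta; revert c; induction Hta; intros c Htc; invert_steps;
    try join_congruence; try solve [eauto 8].
  - left; eexists; split; [apply ctx_step_v_subst0; eassumption | eauto].
  - left; eexists; split; [eauto | apply ctx_step_v_subst0; eassumption].
Qed.

Lemma d_local_quasi_diamond b t a c :
  ctx_step root_d b t a -> ctx_step root_d b t c ->
  (exists e, ctx_step root_d b a e /\ ctx_step root_d b c e) \/ a = c.
Proof.
  intros Hta; revert c; induction Hta; intros c Htc; invert_steps;
    try join_congruence; try solve [eauto 8].
Qed.

Lemma wd_wv_local_commute t a c :
  ctx_step root_d false t a -> ctx_step root_v false t c ->
  exists e, ctx_step root_v false a e /\ ctx_step root_d false c e.
Proof.
  intros Hta; revert c; induction Hta; intros c Htc; invert_steps;
    try join_congruence; try solve [eauto 8].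
  eexists; split; [eauto | apply ctx_step_d_subst0; eassumption].
Qed.

Lemma d_v_local_commute t a c :
  ctx_step root_d true t a -> ctx_step root_v true t c ->
  exists e, ctx_step root_v true a e /\ rstar (ctx_step root_d true) c e.
Proof.
  intros Hta; revert c; induction Hta; intros c Htc; invert_steps;
    try join_congruence; try solve [eauto 8].
  - eexists; split; [eauto | apply rt_step, ctx_step_d_subst0; eassumption].
  - eexists; split; [eauto | apply rstar_ctx_step_d_subst0_arg; eassumption].
Qed.

Inductive par : relation term :=
  | par_var n : par (Var n) (Var n)
  | par_lam t t' : par t t' -> par (Lam t) (Lam t')
  | par_app t t' u u' : par t t' -> par u u' -> par (App t u) (App t' u')
  | par_der t t' : par t t' -> par (Der t) (Der t')
  | par_bang t t' : par t t' -> par (Bang t) (Bang t')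
  | par_beta t t' u u' : par t t' -> par u u' -> par (App (Lam t) (Bang u)) (subst0 t' u').

#[local] Hint Constructors par : core.

Lemma par_refl t : par t t.
Proof. induction t; auto. Qed.

#[local] Hint Resolve par_refl : core.

Lemma par_lift t t' : par t t' -> forall k, par (lift k t) (lift k t').
Proof.
  induction 1; intros k; simpl; auto.
  unfold subst0; rewrite lift_subst_above by lia. apply par_beta; auto.
Qed.

Lemma par_subst t t' : par t t' -> forall k s s', par s s' -> par (subst k s t) (subst k s' t').
Proof.
  induction 1; intros k s s' Hs; simpl; auto using par_lift.
  - destruct (n <? k); [|destruct (n =? k)]; auto.
  - unfold subst0; rewrite subst_subst by lia. apply par_beta; auto using par_lift.
Qed.

Fixpoint dev (t : term) : term :=
  match t with
  | Var n => Var n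
  | Lam t1 => Lam (dev t1)
  | App (Lam t1) (Bang u) => subst0 (dev t1) (dev u)
  | App t1 u => App (dev t1) (dev u)
  | Der t1 => Der (dev t1)
  | Bang t1 => Bang (dev t1)
  end.

Lemma par_dev t t' : par t t' -> par t' (dev t).
Proof.
  induction 1 as [| | t t' u u' Htt' IHt Huu' IHu | | | t t' u u' _ IHt _ IHu]; simpl; auto.
  - destruct t as [| t | | |]; auto. destruct u as [| | | | u]; auto.
    inversion Htt'; inversion Huu'; subst.
    inversion IHt; inversion IHu; subst. auto.
  - unfold subst0; apply par_subst; assumption.
Qed.

Lemma par_diamond t a c : par t a -> par t c -> exists e, par a e /\ par c e.
Proof. exists (dev t); split; apply par_dev; assumption. Qed.

Lemma ctx_step_v_par t s : ctx_step root_v true t s -> par t s.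
Proof. induction 1 as [t s [] | | | | |]; auto. Qed.

Lemma par_rstar_v t s : par t s -> rstar (ctx_step root_v true) t s.
Proof.
  induction 1; auto.
  - apply rt_trans with (App t' u); [apply rstar_ctx_step_appl | apply rstar_ctx_step_appr]; auto.
  - apply rt_trans with (App (Lam t') (Bang u')); [|auto].
    apply rt_trans with (App (Lam t') (Bang u));
      [apply rstar_ctx_step_appl | apply rstar_ctx_step_appr]; auto.
Qed.

Lemma v_confluent t a c :
  rstar (ctx_step root_v true) t a -> rstar (ctx_step root_v true) t c ->
  exists e, rstar (ctx_step root_v true) a e /\ rstar (ctx_step root_v true) c e.
Proof.
  apply confluent_of_diamond_between with par.
  - exact ctx_step_v_par.
  - exact par_rstar_v.
  - exact par_diamond.
Qed.

Lemma quasi_strongly_confluent_transport (R R' : relation term) :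
  (forall x y, R x y <-> R' x y) ->
  (forall t a c, R' t a -> R' t c -> (exists e, R' a e /\ R' c e) \/ a = c) ->
  quasi_strongly_confluent R.
Proof.
  intros HR Hlocal a c (t & Hta & Htc).
  apply HR in Hta, Htc.
  destruct (Hlocal t a c Hta Htc) as [(e & Hae & Hce) | Hac].
  - left; exists e; split; apply HR; assumption.
  - right; exact Hac.
Qed.

Lemma commute_transport (R1 R2 S R1' R2' S' : relation term) :
  (forall x y, R1 x y <-> R1' x y) -> (forall x y, R2 x y <-> R2' x y) ->
  (forall x y, S x y <-> S' x y) ->
  (forall t a c, R1' t a -> S' t c -> exists e, S' a e /\ R2' c e) ->
  rincl (rcomp (conv R1) S) (rcomp S (conv R2)).
Proof.
  intros HR1 HR2 HS Hlocal a c (t & Hta & Htc).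
  apply HR1 in Hta. apply HS in Htc.
  destruct (Hlocal t a c Hta Htc) as (e & Hae & Hce).
  exists e; split; [apply HS | apply HR2]; assumption.
Qed.

Theorem mainTheorem6 :
  (* (1) *)
  quasi_strongly_confluent step_wv /\
  (* (2) *)
  (quasi_strongly_confluent step_wd /\ quasi_strongly_confluent step_d) /\
  (* (3) *)
  (rincl (rcomp (conv step_wd) step_wv) (rcomp step_wv (conv step_wd)) /\
   rincl (rcomp (conv step_d) step_v) (rcomp step_v (conv (rstar step_d))) /\
   rincl (rcomp (conv (rstar step_d)) (rstar step_v))
         (rcomp (rstar step_v) (conv (rstar step_d)))) /\
  (* (4) *)
  rincl (rcomp (conv (rstar step_v)) (rstar step_v))
        (rcomp (rstar step_v) (conv (rstar step_v))).
Proof.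
  repeat split.
  - apply quasi_strongly_confluent_transport with (ctx_step root_v false).
    + apply wctx_clos_iff.
    + apply wv_local_quasi_diamond.
  - apply quasi_strongly_confluent_transport with (ctx_step root_d false).
    + apply wctx_clos_iff.
    + apply d_local_quasi_diamond.
  - apply quasi_strongly_confluent_transport with (ctx_step root_d true).
    + apply ctx_clos_iff.
    + apply d_local_quasi_diamond.
  - apply commute_transport with (ctx_step root_d false) (ctx_step root_d false) (ctx_step root_v false);
      try apply wctx_clos_iff.
    apply wd_wv_local_commute.
  - apply commute_transport with (ctx_step root_d true) (rstar (ctx_step root_d true)) (ctx_step root_v true);
      try apply ctx_clos_iff; try apply rstar_ctx_clos_iff.
    apply d_v_local_commute.
  - apply commute_transport with (rstar (ctx_step root_d true)) (rstar (ctx_step root_d true))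
      (rstar (ctx_step root_v true)); try apply rstar_ctx_clos_iff.
    apply star_commute, d_v_local_commute.
  - apply commute_transport with (rstar (ctx_step root_v true)) (rstar (ctx_step root_v true))
      (rstar (ctx_step root_v true)); try apply rstar_ctx_clos_iff.
    apply v_confluent.
Qed.
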